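(* For a (real or complex) variable $z$ and integers $K\ge0$ let $b_K(z)=\sum_{k=0}^{K}C_k\binom{K+k}{K-k}z^k$, where $C_k=\frac{1}{k+1}\binom{2k}{k}$ are the Catalan numbers. Then for $K\ge2$, $$(K+1)b_K(z)=(2K-1)(1+2z)b_{K-1}(z)-(K-2)b_{K-2}(z),$$ and for $K\ge0$, $$b_{K+1}(z)=b_K(z)+z\sum_{l=0}^{K}b_l(z)b_{K-l}(z),$$ with $b_0(z)=1$ and $b_1(z)=1+z$. *)

From mathcomp Require Import all_boot all_order all_algebra.
Set Implicit Arguments. Unset Strict Implicit. Unset Printing Implicit Defensive.
Import GRing.Theory Num.Theory.
Local Open Scope ring_scope.

(* Catalan numbers C_k = binom(2k,k)/(k+1) (exact division in nat). *)
Definition catalan (k : nat) : nat := ('C(k.*2, k) %/ k.+1)%N.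

Definition bK (R : ringType) (K : nat) (z : R) : R :=
  \sum_(0 <= k < K.+1) ((catalan k * 'C(K + k, K - k))%N)%:R * z ^+ k.

From mathcomp Require Import all_boot all_order all_algebra.
From mathcomp Require Import zify ring.
Import GRing.Theory Num.Theory.

(* Write b_K(z) = sum_k d(K,k) z^k with d(K,k) = C_k binom(K+k,2k); both
   recurrences are identities between coefficients.  For the three-term one,
   d(K,k) k! (k+1)! is the falling factorial (K+k)^(2k), so after clearing
   factorials the four coefficients involved are one falling factorial times
   polynomials in K and k.  For the quadratic one, summing d(l,j) d(K-l,m-j)
   over l is an upper Vandermonde convolution equal to
   C_j C_(m-j) binom(K+m+1,2m+1); Segner's recurrence then sums the Catalan
   products to C_(m+1), and Pascal's rule finishes. *)

Lemma mulS_catalan k : k.+1 * catalan k = 'C(k.*2, k).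
Proof.
rewrite /catalan mulnC divnK //; apply/dvdnP.
exists ('C(k.*2, k) - 'C(k.*2, k.+1)).
have := mul_bin_left k.*2 k; rewrite -{2}addnn addnK => bin_kS.
by rewrite mulnBl [X in _ - X]mulnC bin_kS mulnSr mulnC addKn.
Qed.

Lemma catalan_fact k : catalan k * (k`! * k.+1`!) = k.*2`!.
Proof.
have bin2k := bin_fact (leq_addl k k); rewrite addnK addnn in bin2k.
by rewrite -bin2k -mulS_catalan factS; ring.
Qed.

Lemma catalanS k : k.+2 * catalan k.+1 = 2 * k.*2.+1 * catalan k.
Proof.
apply/eqP; rewrite -(@eqn_pmul2r (k.+1`! * k.+2`!)) ?muln_gt0 ?fact_gt0 //.
rewrite -mulnA catalan_fact doubleS !factS -(catalan_fact k) factS.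
by rewrite -!mul2n; apply/eqP; ring.
Qed.

Lemma sum_weight_symmetric N (f : nat -> nat) :
  (forall i, i <= N -> f (N - i) = f i) ->
  2 * (\sum_(i < N.+1) i * f i) = N * \sum_(i < N.+1) f i.
Proof.
move=> f_sym; rewrite mul2n -addnn {2}(reindex_inj rev_ord_inj) -big_split big_distrr /=.
apply: eq_bigr => i _; have le_iN : i <= N by rewrite -ltnS.
by rewrite subSS f_sym // -mulnDl subnKC.
Qed.

Lemma catalan_convolution N :
  \sum_(i < N.+1) catalan i * catalan (N - i) = catalan N.+1.
Proof.
pose T n := \sum_(i < n.+1) catalan i * catalan (n - i).
pose W n := \sum_(i < n.+1) i * (catalan i * catalan (n - i)).
have W_sym n : 2 * W n = n * T n.
  rewrite /W /T; apply: (sum_weight_symmetric _ (fun i => catalan i * catalan (n - i))).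
  by move=> i le_in; rewrite subKn // mulnC.
have shift_weight n : \sum_(i < n.+1) i.+1 * (catalan i * catalan (n - i)) = W n + T n.
  by rewrite /W /T -big_split; apply: eq_bigr => i _; rewrite mulSnr.
(* For S = sum_i (i+1) C_i C_(N-i), symmetry gives 2 S = (N+2) T N, while
   catalanS and the induction hypothesis give S = (2N+1) C_N; catalanS again
   identifies 2 (2N+1) C_N with (N+2) C_(N+1). *)
change (T N = catalan N.+1); elim: N => [|M IH]; first by rewrite /T big_ord1.
have sum_succ : \sum_(i < M.+2) i.+1 * (catalan i * catalan (M.+1 - i))
                 = (M.+1).*2.+1 * catalan M.+1.
  rewrite big_ord_recl /= subn0.
  under eq_bigr do rewrite /bump /= add1n subSS mulnA catalanS -mulnA
                           -mul2n mulnSr mulnDl -!mulnA.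
  rewrite big_split -!big_distrr /= -/(W M) -/(T M) W_sym IH.
  by rewrite -[catalan 0]/1 -!mul2n; ring.
apply/eqP; rewrite -(@eqn_pmul2l M.+3) // catalanS -mulnA -sum_succ.
by rewrite shift_weight mulnDr W_sym; apply/eqP; ring.
Qed.

Lemma hockey_stick a N : \sum_(0 <= m < N.+1) 'C(m, a) = 'C(N.+1, a.+1).
Proof.
elim: N => [|N IH]; first by rewrite big_nat1; case: a.
by rewrite big_nat_recr //= IH [RHS]binS addnC.
Qed.

Lemma upper_Vandermonde a b N :
  \sum_(0 <= m < N.+1) 'C(m, a) * 'C(N - m, b) = 'C(N.+1, (a + b).+1).
Proof.
elim: N b => [|N IH] [|b].
- by rewrite big_nat1 addn0 muln1; case: a.
- by rewrite big_nat1 muln0 bin_small //; lia.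
- by rewrite addn0 -hockey_stick; apply: eq_bigr => m _; rewrite bin0 muln1.
rewrite big_nat_recr //= subnn muln0 addn0.
rewrite (eq_big_nat _ _
  (F2 := fun m => 'C(m, a) * 'C(N - m, b.+1) + 'C(m, a) * 'C(N - m, b))).
  by rewrite big_split /= !IH addnS.
by move=> m /andP[_ lt_mN]; rewrite subSn // binS mulnDr.
Qed.

Lemma upper_Vandermonde_shift a b i j n : i <= a -> j <= b ->
  \sum_(0 <= l < n.+1) 'C(l + i, a) * 'C(n - l + j, b)
  = 'C((n + i + j).+1, (a + b).+1).
Proof.
move=> le_ia le_jb; rewrite -upper_Vandermonde.
rewrite [RHS](big_cat_nat (n := i)) //=; last by lia.
rewrite [X in _ + X](big_cat_nat (n := (n + i).+1)) //=; [|lia..].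
rewrite [X in _ = X + _]big_nat_cond [X in _ = X + _]big1 ?add0n; last first.
  by move=> m /andP[/andP[_ lt_mi] _]; rewrite bin_small ?mul0n // (leq_trans lt_mi).
rewrite [X in _ = _ + X]big_nat_cond [X in _ = _ + X]big1 ?addn0; last first.
  by move=> m /andP[/andP[lt_nim lt_m] _]; rewrite [X in _ * X]bin_small ?muln0 //; lia.
rewrite -{2}(add0n i) big_addn -addSn addnK.
by apply: eq_big_nat => l /andP[_ lt_ln]; congr (_ * 'C(_, _)); lia.
Qed.

Definition bcoef (K k : nat) : nat := catalan k * 'C(K + k, k.*2).

Lemma bcoef_ffact K k : bcoef K k * (k`! * k.+1`!) = (K + k) ^_ k.*2.
Proof. by rewrite /bcoef mulnAC catalan_fact mulnC bin_ffact. Qed.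

Lemma bcoef0 K : bcoef K 0 = 1.
Proof. by rewrite /bcoef bin0. Qed.

Lemma bcoef_three_term n j :
  n.+3 * bcoef n.+2 j.+1 + n * bcoef n j.+1
  = (n.*2 + 3) * (bcoef n.+1 j.+1 + 2 * bcoef n.+1 j).
Proof.
set F := (n + j).+1 ^_ j.*2.
set M := j.+1`! * j.+2`!.
have b2 : bcoef n.+2 j.+1 * M = (n + j).+3 * (n + j).+2 * F.
  by rewrite bcoef_ffact !addnS !addSn doubleS !ffactSS mulnA.
have b1 : bcoef n.+1 j.+1 * M = (n + j).+2 * F * (n.+1 - j).
  rewrite bcoef_ffact !addnS !addSn doubleS ffactSS ffactnSr -mulnA.
  by congr (_ * (_ * _)); lia.
have b0 : bcoef n j.+1 * M = F * (n.+1 - j) * (n - j).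
  rewrite bcoef_ffact !addnS doubleS !ffactnSr -/F.
  by congr (_ * _ * _); lia.
have bj : bcoef n.+1 j * M = j.+1 * j.+2 * F.
  rewrite -/F -[F](bcoef_ffact n.+1 j) /M !factS; ring.
apply/eqP; rewrite -(@eqn_pmul2r M) ?muln_gt0 ?fact_gt0 //; apply/eqP.
rewrite mulnDl -(mulnA n.+3) -(mulnA n) b2 b0.
rewrite -[in RHS]mulnA (mulnDl (bcoef n.+1 j.+1)) -(mulnA 2) b1 bj.
have [le_jn | lt_nj] := leqP j n.
  have [t ->] : exists t, n = t + j by exists (n - j); rewrite subnK.
  by rewrite -addSn !addnK -!mul2n; ring.
have [-> | lt_Sn_j] := eqVneq j n.+1.
  by rewrite subnn (eqP (leqnSn n)) -!mul2n; ring.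
by rewrite /F ffact_small ?(muln0, mul0n) //; lia.
Qed.

Lemma bcoef_convolution K i j :
  \sum_(l < K.+1) bcoef l i * bcoef (K - l) j
  = catalan i * catalan j * 'C((K + i + j).+1, (i + j).*2.+1).
Proof.
rewrite doubleD -upper_Vandermonde_shift; [|lia..].
by rewrite big_distrr big_mkord; apply: eq_bigr => l _; rewrite /bcoef mulnACA.
Qed.

Lemma bcoef_quadratic K m :
  bcoef K.+1 m.+1
  = bcoef K m.+1 + \sum_(l < K.+1) \sum_(j < m.+1) bcoef l j * bcoef (K - l) (m - j).
Proof.
rewrite exchange_big /=.
under eq_bigr => j _ do rewrite bcoef_convolution -addnA (subnKC (ltn_ord j : j <= m)).
rewrite -big_distrl /= catalan_convolution /bcoef !addnS addSn doubleS binS.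
by rewrite mulnDr addnC.
Qed.

Local Open Scope ring_scope.

Section BPoly.

Variable R : comNzRingType.

Definition bpoly K : {poly R} := \poly_(k < K.+1) (bcoef K k)%:R.

Lemma coef_bpoly K k : (bpoly K)`_k = (bcoef K k)%:R.
Proof.
rewrite coef_poly; case: ltnP => // lt_Kk.
by rewrite /bcoef bin_small ?muln0 // -addnn ltn_add2r.
Qed.

Lemma horner_bpoly K z : (bpoly K).[z] = bK K z.
Proof.
rewrite horner_poly /bK big_mkord; apply: eq_bigr => k _.
rewrite /bcoef -bin_sub; last by rewrite -addnn leq_add2r -ltnS.
by rewrite -addnn subnDr.
Qed.

Lemma bpoly_three_term n :
  n.+3%:R *: bpoly n.+2 + n%:R *: bpoly n
  = (n.*2 + 3)%N%:R *: ((1 + 2 *: 'X) * bpoly n.+1).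
Proof.
apply/polyP => k; rewrite mulrDl mul1r -scalerAl scalerDr.
rewrite !coefD !coefZ coefXM !coef_bpoly.
case: k => [|j] /=; last by rewrite -mulrDr -!natrM -!natrD -natrM bcoef_three_term.
by rewrite !bcoef0 !mulr0 addr0 -!natrM -natrD; congr _%:R; lia.
Qed.

Lemma bpoly_quadratic K :
  bpoly K.+1 = bpoly K + 'X * \sum_(l < K.+1) bpoly l * bpoly (K - l).
Proof.
apply/polyP => m; rewrite coefD coefXM coef_sum !coef_bpoly.
case: m => [|m] /=; first by rewrite !bcoef0 addr0.
rewrite bcoef_quadratic natrD natr_sum; congr (_ + _); apply: eq_bigr => l _.
by rewrite coefM natr_sum; apply: eq_bigr => j _; rewrite !coef_bpoly natrM.
Qed.

End BPoly.

Theorem lemma4 (R : numFieldType) (z : R) :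
  (forall K : nat, (2 <= K)%N ->
     K.+1%:R * bK K z
     = (K.*2 - 1)%N%:R * (1 + 2 * z) * bK K.-1 z - (K%:R - 2) * bK K.-2 z)
  /\ (forall K : nat,
     bK K.+1 z = bK K z + z * \sum_(0 <= l < K.+1) bK l z * bK (K - l) z)
  /\ bK 0 z = 1 /\ bK 1 z = 1 + z.
Proof.
split=> [[|[|n]] // _ /=|].
  have := congr1 (horner^~ z) (bpoly_three_term R n).
  rewrite /= hornerD !hornerZ hornerM hornerD hornerZ hornerX -polyC1 hornerC.
  rewrite !horner_bpoly => three_term.
  have -> : n.+2%:R - 2 = n%:R :> R by rewrite -addn2 natrD addrK.
  by rewrite !doubleS subn1 /= -(addn3 n.*2) -mulrA -three_term addrK.
split=> [K|]; last split.
- have := congr1 (horner^~ z) (bpoly_quadratic R K).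
  rewrite /= hornerD hornerM hornerX horner_sum !horner_bpoly big_mkord => ->.
  by congr (_ + _ * _); apply: eq_bigr => l _; rewrite hornerM !horner_bpoly.
- by rewrite /bK big_nat1 mulr1.
- by rewrite /bK big_nat_recr //= big_nat1 mulr1 mul1r.
Qed.
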